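(* Let $k,g,r_0$ be positive integers with $k\mid r_0$. For every DAG $G$ (for which the quantities are finite), $\mathrm{OPT}^{(k)}/\mathrm{OPT}^{(1)}\ge 1/k$, where $\mathrm{OPT}^{(1)}$ is the MPP optimum of $G$ with $1$ processor and fast memory $r=r_0$, and $\mathrm{OPT}^{(k)}$ is the MPP optimum of $G$ with $k$ processors and fast memory $r=r_0/k$ each (same $g$). Moreover, whenever $r_0/k\ge 2$, there exist DAGs for which $\mathrm{OPT}^{(k)}/\mathrm{OPT}^{(1)}=1/k$.
   Context: Multiprocessor red-blue pebbling (MPP). Input: a DAG $G=(V,E)$ with $n=|V|$ and positive integers $k$ (number of processors), $r$ (fast-memory size per processor), $g$ (cost of an I/O step). $\Delta_{in}$ denotes the maximum in-degree of $G$; sources/sinks are nodes of in-degree/out-degree $0$. A configuration is a tuple $(R^1,\dots,R^k,B)$ of subsets of $V$ ($R^j$ = nodes carrying a red pebble of processor $j$, $B$ = nodes carrying a blue pebble); it is valid if $|R^j|\le r$ for all $j$. The initial configuration has all sets empty; a configuration is terminal if every sink lies in $B\cup\bigcup_j R^j$. The transition rules are: (R1) for some $m\le k$, pairwise distinct processors $j_1,\dots,j_m$ and nodes $v_1,\dots,v_m$ with $v_i\in R^{j_i}$, add each $v_i$ to $B$ (cost $g$); (R2) for some $m\le k$, pairwise distinct processors $j_1,\dots,j_m$ and nodes $v_1,\dots,v_m\in B$, add each $v_i$ to $R^{j_i}$ (cost $g$); (R3) for some $m\le k$, pairwise distinct processors $j_1,\dots,j_m$ and nodes $v_1,\dots,v_m$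 such that every in-neighbor of $v_i$ lies in $R^{j_i}$, add each $v_i$ to $R^{j_i}$ (cost $1$); (R4) remove a single red or blue pebble (cost $0$). A pebbling strategy is a sequence of valid configurations starting at the initial configuration and ending at a terminal one, each obtained from its predecessor by one rule; its cost is the sum of the costs of the rules applied. $\mathrm{OPT}$ denotes the minimum cost of a pebbling strategy. Applications of (R1),(R2) are called I/O steps and applications of (R3) compute steps. *)

From mathcomp Require Import all_boot.
Set Implicit Arguments. Unset Strict Implicit. Unset Printing Implicit Defensive.

Section MPP.
Variable n : nat.
Notation V := 'I_n.
(* E u v  means there is an edge u -> v. *)
Variable E : rel V.

Definition dag : Prop := forall u v, E u v -> ~~ connect E v u.

Definition is_sink (v : V) : bool := [forall w, ~~ E v w].

Variables (k r g : nat).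

(* A configuration (R^1,...,R^k,B). *)
Definition config := ({ffun 'I_k -> {set V}} * {set V})%type.

Definition valid (C : config) : Prop := forall j, #|C.1 j| <= r.

Definition init_config : config := ([ffun _ => set0], set0).

Definition terminal (C : config) : Prop :=
  forall v, is_sink v -> (v \in C.2) \/ (exists j, v \in C.1 j).

(* A parallel move: a partial map from processors to nodes; the processors
   j with f j = Some v_j are the pairwise distinct processors j_1..j_m
   (m >= 1, automatically m <= k) and v_j the associated nodes. *)
Definition moves := 'I_k -> option V.

Definition nonempty_move (f : moves) : Prop := exists j, f j != None.

Definition added (f : moves) (j : 'I_k) : {set V} :=
  if f j is Some v then [set v] else set0.

Definition added_all (f : moves) : {set V} := \bigcup_j added f j.

Inductive step (C : config) : config -> nat -> Prop :=
| step_R1 (f : moves) :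
    nonempty_move f ->
    (forall j v, f j = Some v -> v \in C.1 j) ->
    step C (C.1, C.2 :|: added_all f) g
| step_R2 (f : moves) :
    nonempty_move f ->
    (forall j v, f j = Some v -> v \in C.2) ->
    step C ([ffun j => C.1 j :|: added f j], C.2) g
| step_R3 (f : moves) :
    nonempty_move f ->
    (forall j v, f j = Some v -> forall u, E u v -> u \in C.1 j) ->
    step C ([ffun j => C.1 j :|: added f j], C.2) 1
| step_R4_red (j : 'I_k) (v : V) :
    v \in C.1 j ->
    step C ([ffun i => if i == j then C.1 i :\ v else C.1 i], C.2) 0
| step_R4_blue (v : V) :
    v \in C.2 ->
    step C (C.1, C.2 :\ v) 0.

Inductive run : config -> nat -> Prop :=
| run_init : run init_config 0
| run_step C C' c d : run C c -> valid C' -> step C C' d -> run C' (c + d).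

Definition strategy_cost (c : nat) : Prop := exists C, run C c /\ terminal C.

(* OPT = o : o is the minimum cost of a pebbling strategy (in particular
   a pebbling strategy exists, i.e. OPT is finite). *)
Definition is_OPT (o : nat) : Prop :=
  strategy_cost o /\ forall c, strategy_cost c -> o <= c.

End MPP.

From mathcomp Require Import all_boot.
Set Implicit Arguments. Unset Strict Implicit. Unset Printing Implicit Defensive.

(* A k-processor strategy with memory r per processor is simulated by a single
   processor with memory k * r that holds the union of all red sets: a
   parallel move of m <= k pebbles is replayed as m sequential moves, so the
   cost grows by a factor of at most k.  Conversely, on k isolated nodes the
   k processors compute everything in one parallel step of cost 1, whereas a
   single processor needs one unit of cost per pebbled node. *)

Lemma card_bigcup_leq (T : finType) k (F : 'I_k -> {set T}) m :
  (forall j, #|F j| <= m) -> #|\bigcup_j F j| <= k * m.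
Proof.
move=> leFm; apply: (@leq_trans (\sum_(j < k) #|F j|)).
  elim/big_rec2: _ => [|j m' A _ leAm']; first by rewrite cards0.
  by apply: leq_trans (leq_card_setU _ _) _; rewrite leq_add2l.
by apply: (@leq_trans (\sum_(j < k) m)); [exact: leq_sum | rewrite sum_nat_const card_ord].
Qed.

Section Collapse.
Variables (n : nat) (E : rel 'I_n) (r0 g : nat).
Notation V := 'I_n.

Definition config1 (R B : {set V}) : config n 1 := ([ffun _ => R], B).

Definition collapse k (C : config n k) : config n 1 := config1 (\bigcup_j C.1 j) C.2.

Lemma run_stepE k r (C C' C'' : config n k) c d :
  run E r g C c -> valid r C' -> step E g C C'' d -> C'' = C' ->
  run E r g C' (c + d).
Proof. by move=> runC validC' + eqC; rewrite eqC; exact: run_step. Qed.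

Lemma valid_config1 (R B : {set V}) : #|R| <= r0 -> valid r0 (config1 R B).
Proof. by move=> leR j; rewrite ffunE. Qed.

Lemma terminal_collapse k (C : config n k) : terminal E C -> terminal E (collapse C).
Proof.
move=> termC v sink_v; case: (termC v sink_v) => [inB|[j inR]]; first by left.
by right; exists ord0; rewrite ffunE; apply/bigcupP; exists j.
Qed.

Lemma added_allE k (f : moves n k) : added_all f = [set x in pmap f (enum 'I_k)].
Proof.
apply/setP=> x; rewrite inE mem_pmap; apply/bigcupP/mapP.
  case=> j _; rewrite /added; case fj: (f j) => [v|]; last by rewrite inE.
  by rewrite inE => /eqP ->; exists j; rewrite ?mem_enum.
by case=> j _ fj; exists j; rewrite // /added -fj inE.
Qed.

Lemma size_moves_leq k (f : moves n k) : size (pmap f (enum 'I_k)) <= k.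
Proof. by rewrite size_pmap (leq_trans (count_size _ _)) ?size_enum_ord. Qed.

Lemma mem_moves k (f : moves n k) v : v \in pmap f (enum 'I_k) -> exists j, f j = Some v.
Proof. by rewrite mem_pmap => /mapP [j _ fj]; exists j. Qed.

Lemma bigcup_added k (C : config n k) (f : moves n k) :
  \bigcup_j [ffun j => C.1 j :|: added f j] j =
  (\bigcup_j C.1 j) :|: [set x in pmap f (enum 'I_k)].
Proof.
rewrite -added_allE /added_all -big_split /=.
by apply: eq_bigr => j _; rewrite ffunE.
Qed.

Lemma config1_added (R B : {set V}) v :
  [ffun j => (config1 R B).1 j :|: added (fun=> Some v) j] = [ffun=> R :|: [set v]].
Proof. by apply/ffunP=> j; rewrite !ffunE. Qed.

Lemma run_add_red (B : {set V}) (Q : {set V} -> V -> Prop) cst :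
  (forall (R : {set V}) v, Q R v -> step E g (config1 R B) (config1 (R :|: [set v]) B) cst) ->
  (forall (R R' : {set V}) v, R \subset R' -> Q R v -> Q R' v) ->
  forall vs (R : {set V}) c, run E r0 g (config1 R B) c -> #|R :|: [set x in vs]| <= r0 ->
  (forall v, v \in vs -> Q R v) ->
  run E r0 g (config1 (R :|: [set x in vs]) B) (c + size vs * cst).
Proof.
move=> stepQ monoQ; elim=> [|v vs IH] R c runR leR Qvs.
  by rewrite addn0; congr run: runR; congr config1; apply/setP=> x; rewrite !inE orbF.
have splitR : R :|: [set x in v :: vs] = (R :|: [set v]) :|: [set x in vs].
  by apply/setP=> x; rewrite !inE orbA.
rewrite splitR /= mulSn addnA; rewrite splitR in leR.
have validRv : valid r0 (config1 (R :|: [set v]) B).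
  by apply: valid_config1; apply: leq_trans leR; rewrite subset_leq_card ?subsetUl.
apply: IH leR _; first exact: run_step runR validRv (stepQ R v (Qvs v (mem_head _ _))).
by move=> w vs_w; apply: monoQ (subsetUl _ _) (Qvs w _); rewrite inE vs_w orbT.
Qed.

Lemma run_add_blue (R : {set V}) : #|R| <= r0 ->
  forall vs B c, run E r0 g (config1 R B) c -> {subset vs <= R} ->
  run E r0 g (config1 R (B :|: [set x in vs])) (c + size vs * g).
Proof.
move=> leR; elim=> [|v vs IH] B c runB sub_vs.
  by rewrite addn0; congr run: runB; congr config1; apply/setP=> x; rewrite !inE orbF.
have splitB : B :|: [set x in v :: vs] = (B :|: [set v]) :|: [set x in vs].
  by apply/setP=> x; rewrite !inE orbA.
rewrite splitB /= mulSn addnA.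
apply: IH; last by move=> w vs_w; apply: sub_vs; rewrite inE vs_w orbT.
apply: run_stepE runB (valid_config1 _ leR) _ _.
  apply: (@step_R1 _ _ _ _ _ (fun _ => Some v)); first by exists ord0.
  by move=> j w [<-]; rewrite ffunE; apply: sub_vs; exact: mem_head.
rewrite added_allE enum_ordSl enum_ord0 /=.
by congr (_, _ :|: _); apply/setP=> x; rewrite !inE.
Qed.

Lemma bigcup_remove_red k (C : config n k) j v :
  let U' := \bigcup_i [ffun i => if i == j then C.1 i :\ v else C.1 i] i in
  v \in C.1 j -> U' = \bigcup_i C.1 i \/ U' = (\bigcup_i C.1 i) :\ v.
Proof.
move=> U' Rjv; have subU' : U' \subset \bigcup_i C.1 i.
  by apply/bigcupsP=> i _; rewrite ffunE; case: eqP => _;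
     [apply: subset_trans (subsetDl _ _) _|]; exact: bigcup_sup.
have supU' : (\bigcup_i C.1 i) :\ v \subset U'.
  apply/subsetP=> x /setD1P [xv /bigcupP [i _ Rix]]; apply/bigcupP; exists i => //.
  by rewrite ffunE; case: eqP => // _; rewrite !inE xv.
case U'v: (v \in U'); [left | right]; apply/eqP; rewrite eqEsubset.
  rewrite subU'; apply/subsetP=> x Ux; case: (x =P v) => [-> //|xv].
  by apply: (subsetP supU'); rewrite !inE; apply/andP; split; [apply/eqP|].
rewrite supU' andbT; apply/subsetP=> x U'x; rewrite !inE (subsetP subU') // andbT.
by apply: contraFN U'v => /eqP <-.
Qed.

Section Step.
Variables (k r : nat).
Hypothesis le_kr_r0 : k * r <= r0.

Lemma collapse_step (C C' : config n k) d c :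
  valid r C' -> step E g C C' d -> run E r0 g (collapse C) c ->
  exists2 e, e <= k * d & run E r0 g (collapse C') (c + e).
Proof.
move=> validC' stepC runC.
have leU' : #|\bigcup_j C'.1 j| <= r0 := leq_trans (card_bigcup_leq validC') le_kr_r0.
have subU j : C.1 j \subset \bigcup_i C.1 i by exact: bigcup_sup.
have cost_moves (f : moves n k) cst : size (pmap f (enum 'I_k)) * cst <= k * cst.
  by rewrite leq_mul2r size_moves_leq orbT.
case: stepC leU' => [f _ fR|f _ fB|f _ fpred|j v Rjv|v Bv] /= leU'.
- exists (size (pmap f (enum 'I_k)) * g); first exact: cost_moves.
  rewrite added_allE.
  apply: run_add_blue => // w /mem_moves [j fj]; exact: subsetP (subU j) _ (fR _ _ fj).
- exists (size (pmap f (enum 'I_k)) * g); first exact: cost_moves.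
  rewrite /collapse bigcup_added in leU' *.
  apply: (@run_add_red C.2 (fun _ v => v \in C.2)) => //.
  + move=> R w Bw; have := @step_R2 n E 1 g (config1 R C.2) (fun _ => Some w).
    rewrite config1_added.
    by apply; [exists ord0 | move=> j x [<-]].
  + by move=> w /mem_moves [j fj]; exact: fB fj.
- exists (size (pmap f (enum 'I_k)) * 1); first exact: cost_moves.
  rewrite /collapse bigcup_added in leU' *.
  apply: (@run_add_red C.2 (fun R v => forall u, E u v -> u \in R)) => //.
  + move=> R w predR; have := @step_R3 n E 1 g (config1 R C.2) (fun _ => Some w).
    rewrite config1_added.
    by apply; [exists ord0 | move=> j x [<-] u Euw; rewrite ffunE; exact: predR].
  + by move=> R R' w /subsetP subRR' predR u Euw; apply: subRR'; exact: predR.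
  + by move=> w /mem_moves [j fj] u Euw; apply: subsetP (subU j) _ _; exact: fpred fj u Euw.
- exists 0 => //; rewrite addn0 /collapse.
  case: (bigcup_remove_red Rjv) leU' => -> // leU'.
  rewrite -[c]addn0; apply: run_stepE runC (valid_config1 _ leU') (step_R4_red E g (j := ord0) _) _.
    by rewrite ffunE; exact: subsetP (subU j) _ Rjv.
  by congr pair; apply/ffunP=> i; rewrite !ffunE (ord1 i) eqxx.
- exists 0 => //; rewrite addn0 -[c]addn0.
  exact: run_step runC (valid_config1 _ leU') (step_R4_blue E g (C := collapse C) Bv).
Qed.

Lemma run_collapse (C : config n k) c :
  run E r g C c -> exists2 c', c' <= k * c & run E r0 g (collapse C) c'.
Proof.
elim=> {C c} [|C C' c d _ [c' lec' runC] validC' stepC].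
  exists 0 => //; suff -> : collapse (init_config n k) = init_config n 1 by exact: run_init.
  by congr pair; apply/ffunP=> j; rewrite !ffunE big1 // => i _; rewrite ffunE.
have [e lee rune] := collapse_step validC' stepC runC.
by exists (c' + e) => //; rewrite mulnDr leq_add.
Qed.

Lemma strategy_cost_collapse c :
  strategy_cost E k r g c -> exists2 c', c' <= k * c & strategy_cost E 1 r0 g c'.
Proof.
case=> C [runC termC]; have [c' lec' runC'] := run_collapse runC.
by exists c' => //; exists (collapse C); split; last exact: terminal_collapse.
Qed.

End Step.
End Collapse.

(* Only compute steps enlarge the set of pebbled nodes, by one node each
   on a single processor. *)
Lemma run1_card_pebbled n (E : rel 'I_n) r g (C : config n 1) c :
  run E r g C c -> #|C.1 ord0 :|: C.2| <= c.
Proof.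
elim=> {C c} [|C C' c d _ IH _ stepC]; first by rewrite ffunE setU0 cards0.
have grow (X : {set 'I_n}) e : X \subset C.1 ord0 :|: C.2 -> #|X| <= c + e.
  by move=> subX; apply: leq_trans (leq_addr _ _); exact: leq_trans (subset_leq_card subX) IH.
case: stepC => [f _ fR|f _ fB|f _ fpred|j v _|v _] /=.
- apply: grow; rewrite setUA subUset subxx /=.
  apply/bigcupsP=> j _; rewrite (ord1 j) /added; case fj: (f ord0) => [w|]; last exact: sub0set.
  by rewrite sub1set inE (fR _ _ fj).
- apply: grow; rewrite ffunE setUAC subUset subxx /= /added.
  by case fj: (f ord0) => [w|]; rewrite ?sub0set // sub1set inE (fB _ _ fj) orbT.
- rewrite ffunE; apply: leq_trans (leq_add IH (_ : #|added f ord0| <= 1)).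
    by apply: leq_trans (leq_card_setU _ _); rewrite subset_leq_card // setUAC.
  by rewrite /added; case: (f ord0) => [w|]; rewrite ?cards1 ?cards0.
- by apply: grow; rewrite ffunE (ord1 j) eqxx setSU ?subsetDl.
- by apply: grow; rewrite setUS ?subsetDl.
Qed.

Lemma strategy_cost1_all_sinks n (E : rel 'I_n) r g c :
  (forall v, is_sink E v) -> strategy_cost E 1 r g c -> n <= c.
Proof.
move=> sinks [C [runC termC]]; apply: leq_trans (run1_card_pebbled runC).
rewrite -{1}(card_ord n) -cardsT subset_leq_card //; apply/subsetP=> v _.
by rewrite inE; case: (termC v (sinks v)) => [->|[j]]; rewrite ?orbT // (ord1 j) => ->.
Qed.

Lemma OPT1_leq_OPTk k r0 g n (E : rel 'I_n) opt1 optk :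
  is_OPT E 1 r0 g opt1 -> is_OPT E k (r0 %/ k) g optk -> opt1 <= k * optk.
Proof.
move=> [_ minopt1] [costk _].
have le_kr_r0 : k * (r0 %/ k) <= r0 by rewrite mulnC leq_divM.
have [c' lec' cost1] := strategy_cost_collapse le_kr_r0 costk.
exact: leq_trans (minopt1 _ cost1) lec'.
Qed.

Definition edgeless k : rel 'I_k := [rel u v | false].
Arguments edgeless : clear implicits.

Lemma strategy_cost_edgeless_parallel k r g :
  0 < k -> 0 < r -> strategy_cost (edgeless k) k r g 1.
Proof.
move=> k_gt0 r_gt0; pose f : moves k k := Some.
exists ([ffun j => (init_config k k).1 j :|: added f j], (init_config k k).2); split.
  rewrite -[1]add0n; apply: run_step; first exact: run_init.
    by move=> j; rewrite !ffunE set0U cards1.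
  by apply: step_R3; first exists (Ordinal k_gt0).
by move=> v _; right; exists v; rewrite !ffunE set0U set11.
Qed.

Lemma OPT_edgeless k r0 g : 0 < k -> 0 < r0 %/ k ->
  is_OPT (edgeless k) 1 r0 g k /\ is_OPT (edgeless k) k (r0 %/ k) g 1.
Proof.
move=> k_gt0 r_gt0.
have sinks v : is_sink (edgeless k) v by apply/forallP.
have le_kr_r0 : k * (r0 %/ k) <= r0 by rewrite mulnC leq_divM.
have cost_par := strategy_cost_edgeless_parallel g k_gt0 r_gt0.
have [c1 lec1 cost1] := strategy_cost_collapse le_kr_r0 cost_par.
have lbk c : strategy_cost (edgeless k) 1 r0 g c -> k <= c := strategy_cost1_all_sinks sinks.
have c1k : c1 = k by apply/eqP; rewrite eqn_leq -{1}[k]muln1 lec1 lbk.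
rewrite c1k in cost1.
split; split => // c costc.
have [c' lec' cost1'] := strategy_cost_collapse le_kr_r0 costc.
have : k * 1 <= k * c by rewrite muln1 (leq_trans (lbk _ cost1') lec').
by rewrite leq_pmul2l.
Qed.

Theorem lemma8 (k g r0 : nat) :
  0 < k -> 0 < g -> 0 < r0 -> k %| r0 ->
  (forall (n : nat) (E : rel 'I_n) (opt1 optk : nat),
      dag E ->
      is_OPT E 1 r0 g opt1 ->
      is_OPT E k (r0 %/ k) g optk ->
      opt1 <= k * optk)
  /\
  (2 <= r0 %/ k ->
   exists (n : nat) (E : rel 'I_n) (opt1 optk : nat),
     [/\ dag E, is_OPT E 1 r0 g opt1, is_OPT E k (r0 %/ k) g optk,
         0 < opt1 & opt1 = k * optk]).
Proof.
move=> k_gt0 _ _ _; split=> [n E opt1 optk _|r_ge2]; first exact: OPT1_leq_OPTk.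
have [opt1E optkE] := OPT_edgeless g k_gt0 (ltnW r_ge2).
by exists k, (edgeless k), k, 1; split; rewrite ?muln1.
Qed.
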